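(* Let $k$ be a commutative ring, $A$ a commutative $k$-algebra and $m\ge1$ an integer or $m=\infty$. There is a well-defined $A$-linear map $\chi_m:\operatorname{Ider}_k(A;m)\to\operatorname{EXP}_m(\operatorname{gr}\operatorname{Diff}_{A/k})$ such that $\chi_m(\delta)=\Sigma_m(D)$ for every $\delta\in\operatorname{Ider}_k(A;m)$ and every $D\in\operatorname{HS}_k(A;m)$ with $D_1=\delta$.
   Context: $\operatorname{HS}_k(A;m)$: sequences $D=(D_0,\dots,D_m)$ of $k$-linear maps $A\to A$ with $D_0=\mathrm{Id}$, $D_i(xy)=\sum_{r+s=i}D_r(x)D_s(y)$; it is a group under $(D\circ D')_n=\sum_{i+j=n}D_i\circ D'_j$. $\operatorname{Ider}_k(A;m)$ is the set of $\delta\in\operatorname{Der}_k(A)$ with $\delta=D_1$ for some $D\in\operatorname{HS}_k(A;m)$. $\operatorname{gr}\operatorname{Diff}_{A/k}$ is the graded ring associated to the order filtration of the ring of $k$-linear differential operators of $A$, $\sigma_i$ the symbol maps, $\Sigma_m(D)=\sum_{i=0}^m\sigma_i(D_i)t^i$. For an $A$-algebra $B$, $\operatorname{EXP}_m(B)$ is the set of $\sum_{i=0}^mR_it^i\in B[[t]]/(t^{m+1})$ with $R_0=1$ and $\binom{i+j}{i}R_{i+j}=R_iR_j$ for $i+j\le m$; it is an $A$-module with addition = multiplication of series and $a\cdot\sum R_it^i=\sum a^iR_it^i$. *)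

From HB Require Import structures.
From mathcomp Require Import all_boot all_order all_algebra.
Set Implicit Arguments. Unset Strict Implicit. Unset Printing Implicit Defensive.
Import GRing.Theory.
Local Open Scope ring_scope.

(* Lengths m >= 1 of Hasse-Schmidt derivations: a natural number or infinity. *)
Inductive hslen := Fin of nat | Inf.

Definition le_len (i : nat) (m : hslen) : Prop :=
  match m with Fin n => (i <= n)%N | Inf => True end.

Section Diff.
(* k a commutative ring, A a commutative k-algebra given by its structure map
   phi : k -> A (a ring morphism); the k-module structure on A is c.x = phi c * x *)
Variables (k A : comPzRingType) (phi : {rmorphism k -> A}).

Definition klinear (P : A -> A) : Prop :=
  forall (c : k) (x y : A), P (phi c * x + y) = phi c * P x + P y.

Definition comm_op (P : A -> A) (a : A) : A -> A := fun x => P (a * x) - a * P x.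

(* Grothendieck's order filtration of Diff_{A/k}:
   Diff_lt n P  <->  P \in Diff^{n-1}_{A/k}, with Diff^{-1} = 0 and
   P \in Diff^{n} iff P is k-linear and [P, a] \in Diff^{n-1} for every a. *)
Fixpoint Diff_lt (n : nat) (P : A -> A) : Prop :=
  match n with
  | 0 => forall x, P x = 0
  | n'.+1 => klinear P /\ forall a : A, Diff_lt n' (comm_op P a)
  end.

Definition Diff (n : nat) (P : A -> A) : Prop := Diff_lt n.+1 P.

(* Equality of symbols of degree n in gr Diff_{A/k}:
   sigma_n(P) = sigma_n(Q) in Diff^n / Diff^{n-1}, i.e. P - Q \in Diff^{n-1}. *)
Definition sym_eq (n : nat) (P Q : A -> A) : Prop :=
  Diff_lt n (fun x => P x - Q x).

(* Hasse-Schmidt derivations of length m (only D_0, ..., D_m matter). *)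
Definition isHS (m : hslen) (D : nat -> A -> A) : Prop :=
  (forall x, D 0%N x = x) /\
  (forall i, le_len i m -> klinear (D i)) /\
  (forall i (x y : A), le_len i m ->
      D i (x * y) = \sum_(r < i.+1) D r x * D (i - r)%N y).

Definition isDer (d : A -> A) : Prop :=
  klinear d /\ forall x y, d (x * y) = x * d y + d x * y.

Definition Ider (m : hslen) (d : A -> A) : Prop :=
  isDer d /\ exists D, isHS m D /\ forall x, D 1%N x = d x.

(* A series sum_{i<=m} sigma_i(R_i) t^i with homogeneous coefficients
   (R_i \in Diff^i) lies in EXP_m(gr Diff_{A/k}):
   R_0 = 1 and binom(i+j,i) R_{i+j} = R_i R_j for i + j <= m,
   the product in gr Diff being sigma_i(P) sigma_j(Q) = sigma_{i+j}(P o Q). *)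
Definition inEXP (m : hslen) (R : nat -> A -> A) : Prop :=
  (forall i, le_len i m -> Diff i (R i)) /\
  sym_eq 0 (R 0%N) id /\
  (forall i j, le_len (i + j) m ->
     sym_eq (i + j) (fun x => R (i + j)%N x *+ 'C(i + j, i)) (fun x => R i (R j x))).

End Diff.

From HB Require Import structures.
From mathcomp Require Import all_boot all_order all_algebra.
From mathcomp Require Import zify ring.
From Stdlib Require Import ClassicalEpsilon.
Set Implicit Arguments. Unset Strict Implicit. Unset Printing Implicit Defensive.
Import GRing.Theory.
Local Open Scope ring_scope.

(* Write P ≡_n Q for sym_eq n P Q, i.e. P - Q ∈ Diff^{n-1}.  The whole proof
   rests on one computation: for a Hasse-Schmidt derivation D and a ∈ A,
     [D_{j+1}, a] ≡_j D_1(a) D_j                                  (leading commutator)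
   since [D_{j+1}, a] = Σ_{r<=j} D_{r+1}(a) D_{j-r} and D_s ∈ Diff^s.
   From it, by induction on the order,
   - D_i ≡_i E_i whenever D_1 = E_1 (the symbol σ_i(D_i) depends only on D_1);
   - binom(i+j, i) D_{i+j} ≡_{i+j} D_i D_j (the divided-power relation of EXP_m).
   Hence χ_m(δ) := Σ_m(D), for any chosen D ∈ HS_k(A;m) with D_1 = δ, is well
   defined and lies in EXP_m.  Its A-linearity comes from the group law
   (D ∘ E)_n = Σ_{i+j=n} D_i E_j and the scaling (a·D)_n = a^n D_n on HS_k(A;m),
   which have first components D_1 + E_1 and a D_1. *)

Section Filtration.
Variables (k A : comPzRingType) (phi : {rmorphism k -> A}).
Local Notation klin := (klinear phi).
Local Notation Dlt := (Diff_lt phi).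

Lemma klinD P x y : klin P -> P (x + y) = P x + P y.
Proof. by move=> HP; have := HP 1 x y; rewrite rmorph1 !mul1r. Qed.

Lemma klin0 P : klin P -> P 0 = 0.
Proof. by move=> HP; apply: (@addrI _ (P 0)); rewrite -klinD // !addr0. Qed.

Lemma klinB P x y : klin P -> P (x - y) = P x - P y.
Proof.
move=> HP; have := HP (-1) y 0.
by rewrite rmorphN1 !mulN1r addr0 klin0 // addr0 => <-; rewrite klinD.
Qed.

Lemma klin_sum_morph P n (F : 'I_n -> A) :
  klin P -> P (\sum_(i < n) F i) = \sum_(i < n) P (F i).
Proof. by move=> HP; apply: (big_morph P (fun x y => klinD x y HP) (klin0 HP)). Qed.

Lemma klin_ext P Q : (forall x, P x = Q x) -> klin P -> klin Q.
Proof. by move=> E HP c x y; rewrite -!E; exact: HP. Qed.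

Lemma klin_zero : klin (fun _ => 0).
Proof. by move=> c x y; rewrite mulr0 addr0. Qed.

Lemma klin_add P Q : klin P -> klin Q -> klin (fun x => P x + Q x).
Proof. by move=> HP HQ c x y; rewrite HP HQ mulrDr addrACA. Qed.

Lemma klin_mull b P : klin P -> klin (fun x => b * P x).
Proof. by move=> HP c x y; rewrite HP mulrDr mulrCA. Qed.

Lemma klin_sub P Q : klin P -> klin Q -> klin (fun x => P x - Q x).
Proof.
move=> HP HQ; apply: klin_ext (klin_add HP (klin_mull (-1) HQ)) => x.
by rewrite mulN1r.
Qed.

Lemma klin_muln c P : klin P -> klin (fun x => P x *+ c).
Proof. by move=> HP; apply: klin_ext (klin_mull c%:R HP) => x; rewrite mulr_natl. Qed.

Lemma klin_comp P Q : klin P -> klin Q -> klin (fun x => P (Q x)).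
Proof. by move=> HP HQ c x y; rewrite HQ HP. Qed.

Lemma klin_sum n (F : nat -> A -> A) : (forall r, (r < n)%N -> klin (F r)) ->
  klin (fun x => \sum_(r < n) F r x).
Proof.
elim: n F => [|n IH] F HF.
  by apply: klin_ext klin_zero => x; rewrite big_ord0.
apply: klin_ext (klin_add (IH F (fun r hr => HF r (leqW hr))) (HF n (ltnSn n))) => x.
by rewrite big_ord_recr.
Qed.

Lemma Dlt_ext n P Q : (forall x, P x = Q x) -> Dlt n P -> Dlt n Q.
Proof.
elim: n P Q => [|n IH] P Q E /=; first by move=> HP x; rewrite -E.
move=> [HP1 HP2]; split; first exact: klin_ext HP1.
by move=> a; apply: IH (HP2 a) => x; rewrite /comm_op !E.
Qed.

Lemma Dlt_zero n : Dlt n (fun _ => 0).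
Proof.
elim: n => [|n IH] //=; split; first exact: klin_zero.
by move=> a; apply: Dlt_ext IH => x; rewrite /comm_op mulr0 subr0.
Qed.

Lemma Dlt_add n P Q : Dlt n P -> Dlt n Q -> Dlt n (fun x => P x + Q x).
Proof.
elim: n P Q => [|n IH] P Q /=; first by move=> HP HQ x; rewrite HP HQ addr0.
move=> [HP1 HP2] [HQ1 HQ2]; split; first exact: klin_add.
move=> a; apply: Dlt_ext (IH _ _ (HP2 a) (HQ2 a)) => x.
by rewrite /comm_op mulrDr opprD addrACA.
Qed.

Lemma Dlt_mull n b P : Dlt n P -> Dlt n (fun x => b * P x).
Proof.
elim: n P => [|n IH] P /=; first by move=> HP x; rewrite HP mulr0.
move=> [HP1 HP2]; split; first exact: klin_mull.
move=> a; apply: Dlt_ext (IH _ (HP2 a)) => x.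
by rewrite /comm_op mulrBr [b * (a * _)]mulrCA.
Qed.

Lemma Dlt_sub n P Q : Dlt n P -> Dlt n Q -> Dlt n (fun x => P x - Q x).
Proof.
move=> HP HQ; apply: Dlt_ext (Dlt_add HP (Dlt_mull (-1) HQ)) => x.
by rewrite mulN1r.
Qed.

Lemma Dlt_muln n c P : Dlt n P -> Dlt n (fun x => P x *+ c).
Proof. by move=> HP; apply: Dlt_ext (Dlt_mull c%:R HP) => x; rewrite mulr_natl. Qed.

Lemma Dlt_sum n N (F : nat -> A -> A) : (forall r, (r < N)%N -> Dlt n (F r)) ->
  Dlt n (fun x => \sum_(r < N) F r x).
Proof.
elim: N F => [|N IH] F HF.
  by apply: Dlt_ext (Dlt_zero n) => x; rewrite big_ord0.
apply: Dlt_ext (Dlt_add (IH F (fun r hr => HF r (leqW hr))) (HF N (ltnSn N))) => x.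
by rewrite big_ord_recr.
Qed.

Lemma Dlt_succ n P : Dlt n P -> Dlt n.+1 P.
Proof.
elim: n P => [|n IH] P /=.
  move=> HP; split; first by move=> c x y; rewrite !HP mulr0 addr0.
  by move=> a x; rewrite /comm_op !HP mulr0 subr0.
by move=> [HP1 HP2]; split => // a; exact: IH.
Qed.

Lemma Dlt_le n n' P : (n <= n')%N -> Dlt n P -> Dlt n' P.
Proof.
move=> le_nn'; rewrite -(subnK le_nn'); elim: (n' - n)%N => [|d IH] HP //.
by rewrite addSn; apply/Dlt_succ/IH.
Qed.

Lemma Dlt_comm n P a : Dlt n.+1 P -> Dlt n (comm_op P a).
Proof. by case=> _; apply. Qed.

Lemma comm_comp P Q a x : klin P ->
  comm_op (fun y => P (Q y)) a x = P (comm_op Q a x) + comm_op P a (Q x).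
Proof. by move=> HP; rewrite /comm_op (klinB _ _ HP) addrA subrK. Qed.

Lemma Dlt_comp p q P Q : Dlt p P -> Dlt q.+1 Q -> Dlt (p + q) (fun x => P (Q x)).
Proof.
elim: p q P Q => [|p IHp] q P Q HP HQ.
  by apply: Dlt_ext (Dlt_zero _) => x; rewrite HP.
case: HP => HP1 HP2; elim: q Q HQ => [|q IHq] Q HQ; case: (HQ) => HQ1 HQ2.
  rewrite addn0; split; first exact: klin_comp.
  move=> a; have := IHp 0%N _ Q (HP2 a) HQ; rewrite addn0.
  by apply: Dlt_ext => x; rewrite [RHS]comm_comp // (HQ2 a x) klin0 // add0r.
rewrite addSn; split; first exact: klin_comp.
move=> a; apply: Dlt_ext (Dlt_add _ (IHp q.+1 _ Q (HP2 a) HQ)) => [x|].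
  by rewrite [RHS]comm_comp.
by rewrite -addSnnS; apply: IHq; apply: HQ2.
Qed.

Lemma Dlt_comp_lt p q P Q : Dlt p.+1 P -> Dlt q Q -> Dlt (p + q) (fun x => P (Q x)).
Proof.
case: q => [|q] HP HQ; last by rewrite -addSnnS; exact: Dlt_comp.
by apply: Dlt_ext (Dlt_zero _) => x; rewrite HQ klin0 //; case: HP.
Qed.

End Filtration.

Section Convolution.
Variable V : nmodType.

(* conv n F = Σ_{i+j=n} F i j, the coefficient of t^n in a product of series. *)
Definition conv (n : nat) (F : nat -> nat -> V) : V := \sum_(i < n.+1) F i (n - i)%N.

Lemma conv_ext n F G : (forall i, (i <= n)%N -> F i (n - i)%N = G i (n - i)%N) ->
  conv n F = conv n G.
Proof. by move=> E; apply: eq_bigr => i _; apply: E; rewrite -ltnS. Qed.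

Lemma conv_sym n F : conv n F = conv n (fun i j => F j i).
Proof.
rewrite /conv (reindex_inj rev_ord_inj) /=; apply: eq_bigr => i _.
by rewrite subSS subKn // -ltnS.
Qed.

Lemma conv_assoc n (F : nat -> nat -> nat -> V) :
  conv n (fun i j => conv i (fun t u => F t u j)) =
  conv n (fun t l => conv l (fun u j => F t u j)).
Proof.
elim: n F => [|n IH] F; first by rewrite /conv !big_ord1.
rewrite /conv [RHS]big_ord_recl.
have -> : \sum_(i < n.+2) \sum_(t < i.+1) F t (i - t)%N (n.+1 - i)%N =
  \sum_(i < n.+2) F 0%N i (n.+1 - i)%N +
  \sum_(i < n.+2) \sum_(t < i) F t.+1 (i - t.+1)%N (n.+1 - i)%N.
  rewrite -big_split; apply: eq_bigr => i _; rewrite big_ord_recl subn0.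
  by congr (_ + _); apply: eq_bigr => t _; rewrite lift0.
rewrite [X in _ + X = _]big_ord_recl big_ord0 add0r subn0; congr (_ + _).
have := IH (fun t => F t.+1); rewrite /conv => E.
transitivity (\sum_(i < n.+1) \sum_(t < i.+1) F t.+1 (i - t)%N (n - i)%N).
  by apply: eq_bigr => i _; rewrite lift0 subSS; apply: eq_bigr => t _; rewrite subSS.
by rewrite E; apply: eq_bigr => t _; rewrite lift0 subSS.
Qed.

(* The middle-four interchange Σ_{(t+u)+(s+v)=n} = Σ_{(t+s)+(u+v)=n}, which is
   what makes the composite of two Hasse-Schmidt derivations multiplicative. *)
Lemma conv_interchange n (G : nat -> nat -> nat -> nat -> V) :
  conv n (fun i j => conv i (fun t u => conv j (fun s v => G t u s v))) =
  conv n (fun p q => conv p (fun t s => conv q (fun u v => G t u s v))).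
Proof.
have swap l (K : nat -> nat -> nat -> V) :
    conv l (fun u j => conv j (fun s v => K u s v)) =
    conv l (fun s c => conv c (fun u v => K u s v)).
  transitivity (conv l (fun w v => conv w (fun u s => K u s v))).
    by symmetry; exact: (conv_assoc l (fun u s v => K u s v)).
  transitivity (conv l (fun w v => conv w (fun s u => K u s v))).
    by apply: conv_ext => w _; exact: conv_sym.
  exact: (conv_assoc l (fun s u v => K u s v)).
rewrite (conv_assoc n (fun t u j => conv j (fun s v => G t u s v))).
transitivity (conv n (fun t l => conv l (fun s c => conv c (fun u v => G t u s v)))).
  by apply: conv_ext => t _; exact: swap.
by symmetry; exact: (conv_assoc n (fun t s c => conv c (fun u v => G t u s v))).
Qed.

End Convolution.

Lemma le_len_le i j m : (i <= j)%N -> le_len j m -> le_len i m.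
Proof. by case: m => //= n; apply: leq_trans. Qed.

Section HasseSchmidt.
Variables (k A : comPzRingType) (phi : {rmorphism k -> A}) (m : hslen).
Local Notation Dlt := (Diff_lt phi).

Lemma HS_comm D i a x : isHS phi m D -> le_len i m ->
  comm_op (D i) a x = \sum_(r < i) D r.+1 a * D (i - r.+1)%N x.
Proof.
move=> [D0 [_ DM]] hi; rewrite /comm_op DM // big_ord_recl D0 subn0 addrAC subrr add0r.
by apply: eq_bigr => r _; rewrite lift0.
Qed.

Lemma HS_diff D i : isHS phi m D -> le_len i m -> Dlt i.+1 (D i).
Proof.
move=> HD; elim/ltn_ind: i => i IH hi /=; split; first exact: HD.2.1 _ hi.
move=> a; apply: (Dlt_ext (P := fun x => \sum_(r < i) D r.+1 a * D (i - r.+1)%N x)).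
  by move=> x; rewrite (HS_comm _ _ HD hi).
apply: (Dlt_sum (F := fun r x => D r.+1 a * D (i - r.+1)%N x)) => r hr.
apply: Dlt_mull; apply: (Dlt_le _ (IH (i - r.+1)%N _ _)); try lia.
by apply: le_len_le hi; lia.
Qed.

Lemma HS_comm_lead D j a : isHS phi m D -> le_len j.+1 m ->
  Dlt j (fun x => comm_op (D j.+1) a x - D 1%N a * D j x).
Proof.
move=> HD hj.
apply: (Dlt_ext (P := fun x => \sum_(r < j) D r.+2 a * D (j - r.+1)%N x)).
  move=> x; rewrite (HS_comm _ _ HD hj) big_ord_recl subSS subn0 addrAC subrr add0r.
  by apply: eq_bigr => r _; rewrite lift0.
apply: (Dlt_sum (F := fun r x => D r.+2 a * D (j - r.+1)%N x)) => r hr.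
apply: Dlt_mull; apply: (Dlt_le _ (HS_diff HD _)); first lia.
by apply: le_len_le hj; lia.
Qed.

Lemma HS_symbol_unique D E : isHS phi m D -> isHS phi m E ->
  (forall x, D 1%N x = E 1%N x) -> forall i, le_len i m -> sym_eq phi i (D i) (E i).
Proof.
move=> HD HE DE1; elim=> [|j IH] hj; first by move=> x; rewrite HD.1 HE.1 subrr.
have hj' : le_len j m by apply: le_len_le hj.
split; first exact: klin_sub (HD.2.1 _ hj) (HE.2.1 _ hj).
move=> a; have DEj := Dlt_mull (D 1%N a) (IH hj').
apply: Dlt_ext (Dlt_add (Dlt_sub (HS_comm_lead a HD hj) (HS_comm_lead a HE hj)) DEj).
by move=> x; rewrite /comm_op DE1; ring.
Qed.

Lemma HS_binom D i j : isHS phi m D -> le_len (i + j) m ->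
  sym_eq phi (i + j) (fun x => D (i + j)%N x *+ 'C(i + j, i)) (fun x => D i (D j x)).
Proof.
move=> HD; have [D0 [Dlin _]] := HD.
have edge i' j' : (i' == 0%N) || (j' == 0%N) ->
    sym_eq phi (i' + j') (fun x => D (i' + j')%N x *+ 'C(i' + j', i')) (fun x => D i' (D j' x)).
  case: i' j' => [|i'] [|j'] // _; apply: Dlt_ext (Dlt_zero _ _) => x;
  by rewrite ?add0n ?addn0 ?bin0 ?binn mulr1n !D0 subrr.
move En: (i + j)%N => n; elim: n i j En => [|n IH] i j En hn.
  by move: En => /eqP; rewrite addn_eq0 => /andP[/eqP-> /eqP->] x; rewrite bin0 mulr1n !D0 subrr.
case: i j En => [|i] [|j] En; try by rewrite -En; apply: edge.
have hl l : (l <= n.+1)%N -> le_len l m by move=> le_ln; apply: le_len_le hn.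
have [hi1 hj1 hj hn'] : [/\ le_len i.+1 m, le_len j.+1 m, le_len j m & le_len n m].
  by split; apply: hl; lia.
have En1 : (i.+1 + j)%N = n by lia.
have En2 : (i + j.+1)%N = n by lia.
rewrite /sym_eq /=; split.
  exact: (klin_sub (klin_muln _ (Dlin _ hn))
                   (klin_comp (Dlin _ hi1) (Dlin _ hj1))).
(* With b = D_1(a) and c = binom(n+1, i+1) = binom(n, i+1) + binom(n, i):
     [c D_{n+1} - D_{i+1} D_{j+1}, a]
       = c ([D_{n+1}, a] - b D_n) - D_{i+1} ([D_{j+1}, a] - b D_j)
         - [D_{i+1}, b] D_j - ([D_{i+1}, a] - b D_i) D_{j+1}
         + b ((binom(n, i+1) D_n - D_{i+1} D_j) + (binom(n, i) D_n - D_i D_{j+1})),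
   and every term on the right lies in Diff^{n-1}. *)
move=> a; set b := D 1%N a.
have lead_n := HS_comm_lead a HD hn.
have lead_right := Dlt_comp_lt (HS_diff HD hi1) (HS_comm_lead a HD hj1).
have comm_b := Dlt_comp (Dlt_comm b (HS_diff HD hi1)) (HS_diff HD hj).
have lead_left := Dlt_comp (HS_comm_lead a HD hi1) (HS_diff HD hj1).
rewrite En1 in lead_right comm_b; rewrite En2 in lead_left.
have IH1 := IH i.+1 j En1 hn'.
have IH2 := IH i j.+1 En2 hn'.
apply: Dlt_ext (Dlt_add (Dlt_sub (Dlt_sub (Dlt_sub (Dlt_muln 'C(n.+1, i.+1) lead_n)
                                           lead_right) comm_b) lead_left)
                        (Dlt_mull b (Dlt_add IH1 IH2))).
by move=> x; rewrite /comm_op !(klinB _ _ (Dlin _ hi1)) binS /b; ring.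
Qed.

Definition compHS (D E : nat -> A -> A) : nat -> A -> A :=
  fun n x => conv n (fun i j => D i (E j x)).

Lemma compHS_isHS D E : isHS phi m D -> isHS phi m E -> isHS phi m (compHS D E).
Proof.
move=> [D0 [Dlin DM]] [E0 [Elin EM]]; split; [|split].
- by move=> x; rewrite /compHS /conv big_ord1 /= D0 E0.
- move=> i hi; apply: (klin_sum (F := fun r x => D r (E (i - r)%N x))) => r hr.
  by apply: klin_comp; [apply: Dlin|apply: Elin]; apply: le_len_le hi; lia.
move=> n x y hn; have hl l : (l <= n)%N -> le_len l m by move=> ?; apply: le_len_le hn.
rewrite /compHS; transitivity (conv n (fun i j =>
    conv i (fun t u => conv j (fun s v => D t (E s x) * D u (E v y))))).
  apply: conv_ext => i hi; rewrite EM; last by apply: hl; rewrite leq_subr.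
  rewrite /conv (klin_sum_morph _ (Dlin i (hl i hi))) exchange_big /=.
  by apply: eq_bigr => s _; rewrite DM //; apply: hl.
rewrite conv_interchange {1}/conv; apply: eq_bigr => p _.
by rewrite /conv mulr_suml; apply: eq_bigr => t _; rewrite mulr_sumr.
Qed.

Definition scaleHS (a : A) (D : nat -> A -> A) : nat -> A -> A :=
  fun n x => a ^+ n * D n x.

Lemma scaleHS_isHS a D : isHS phi m D -> isHS phi m (scaleHS a D).
Proof.
move=> [D0 [Dlin DM]]; split; [|split].
- by move=> x; rewrite /scaleHS expr0 mul1r D0.
- by move=> i hi; apply: klin_mull; apply: Dlin.
move=> n x y hn; rewrite /scaleHS DM // mulr_sumr; apply: eq_bigr => r _.
by rewrite [RHS]mulrACA -exprD subnKC // -ltnS.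
Qed.

Definition HS_extends (d : A -> A) (D : nat -> A -> A) : Prop :=
  isHS phi m D /\ forall x, D 1%N x = d x.

Lemma compHS_extends d d' D E : HS_extends d D -> HS_extends d' E ->
  HS_extends (fun x => d x + d' x) (compHS D E).
Proof.
move=> [HD D1] [HE E1]; split; first exact: compHS_isHS.
by move=> x; rewrite /compHS /conv big_ord_recr big_ord1 /= HD.1 HE.1 D1 E1 addrC.
Qed.

Lemma scaleHS_extends a d D : HS_extends d D -> HS_extends (fun x => a * d x) (scaleHS a D).
Proof.
by move=> [HD D1]; split; [exact: scaleHS_isHS | move=> x; rewrite /scaleHS expr1 D1].
Qed.

Lemma Ider_add d d' : Ider phi m d -> Ider phi m d' -> Ider phi m (fun x => d x + d' x).
Proof.
move=> [[dlin dM] [D HD]] [[dlin' dM'] [E HE]]; split.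
  split; first exact: klin_add.
  by move=> x y; rewrite dM dM'; ring.
by exists (compHS D E); exact: compHS_extends.
Qed.

Lemma Ider_scale a d : Ider phi m d -> Ider phi m (fun x => a * d x).
Proof.
move=> [[dlin dM] [D HD]]; split.
  split; first exact: klin_mull.
  by move=> x y; rewrite dM; ring.
by exists (scaleHS a D); exact: scaleHS_extends.
Qed.

(* χ_m(δ): a chosen Hasse-Schmidt derivation of length m extending δ. *)
Definition chi (d : A -> A) : nat -> A -> A :=
  epsilon (inhabits (fun (_ : nat) (x : A) => x)) (HS_extends d).

Lemma chi_spec d : Ider phi m d -> HS_extends d (chi d).
Proof. by move=> [_ [D HD]]; exact: (epsilon_spec _ _ (ex_intro _ D HD)). Qed.

Lemma chi_symbol d D : Ider phi m d -> HS_extends d D ->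
  forall i, le_len i m -> sym_eq phi i (chi d i) (D i).
Proof.
move=> hd [HD D1]; have [Hchi chi1] := chi_spec hd.
by apply: HS_symbol_unique => // x; rewrite chi1 D1.
Qed.

Lemma chi_EXP d : Ider phi m d -> inEXP phi m (chi d).
Proof.
move=> hd; have [Hchi _] := chi_spec hd; split; [|split].
- by move=> i hi; exact: HS_diff.
- by move=> x; rewrite Hchi.1 subrr.
- by move=> i j hij; exact: HS_binom.
Qed.

(* Additivity: χ_m(δ + δ') = χ_m(δ) ∘ χ_m(δ'), the sum of EXP_m. *)
Lemma chi_add d d' n : Ider phi m d -> Ider phi m d' -> le_len n m ->
  sym_eq phi n (chi (fun x => d x + d' x) n) (compHS (chi d) (chi d') n).
Proof.
move=> hd hd'.
exact: chi_symbol (Ider_add hd hd') (compHS_extends (chi_spec hd) (chi_spec hd')) n.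
Qed.

Lemma chi_scale a d n : Ider phi m d -> le_len n m ->
  sym_eq phi n (chi (fun x => a * d x) n) (scaleHS a (chi d) n).
Proof.
move=> hd; exact: chi_symbol (Ider_scale a hd) (scaleHS_extends a (chi_spec hd)) n.
Qed.

End HasseSchmidt.

Theorem mainTheorem9 (k A : comPzRingType) (phi : {rmorphism k -> A})
    (m : hslen) (hm : le_len 1 m) :
  exists chi : (A -> A) -> nat -> A -> A,
    (* chi maps Ider_k(A;m) into EXP_m(gr Diff_{A/k}) *)
    (forall d, Ider phi m d -> inEXP phi m (chi d)) /\
    (* chi(delta) = Sigma_m(D) for every D in HS_k(A;m) with D_1 = delta *)
    (forall d D, Ider phi m d -> isHS phi m D -> (forall x, D 1%N x = d x) ->
       forall i, le_len i m -> sym_eq phi i (chi d i) (D i)) /\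
    (* additivity: chi(d + d') = chi(d) + chi(d') (sum in EXP = product of series) *)
    (forall d d', Ider phi m d -> Ider phi m d' ->
       Ider phi m (fun x => d x + d' x) /\
       forall n, le_len n m ->
         sym_eq phi n (chi (fun x => d x + d' x) n)
           (fun x => \sum_(i < n.+1) chi d i (chi d' (n - i)%N x))) /\
    (* A-homogeneity: chi(a d) = a . chi(d), with a . sum R_i t^i = sum a^i R_i t^i *)
    (forall (a : A) d, Ider phi m d ->
       Ider phi m (fun x => a * d x) /\
       forall n, le_len n m ->
         sym_eq phi n (chi (fun x => a * d x) n) (fun x => a ^+ n * chi d n x)).
Proof.
exists (chi phi m); split; first exact: chi_EXP.
split; first by move=> d D hd HD D1; exact: chi_symbol hd (conj HD D1).
split; first by move=> d d' hd hd'; split; [exact: Ider_add | move=> n; exact: chi_add].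
by move=> a d hd; split; [exact: Ider_scale | move=> n; exact: chi_scale].
Qed.
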